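(* Let $C$ be a smooth affine rational curve over an algebraically closed field $k$ of characteristic zero. Then the bracket width of the simple Lie algebra $\mathrm{Vec}(C)$ is at most two.
   Context: $\mathrm{Vec}(C)=H^0(C,\mathcal{T}_C)$ is the Lie algebra of algebraic vector fields on $C$. The bracket width of a Lie algebra $L$ is the supremum over $a\in[L,L]$ of the smallest number $m$ such that $a$ is a sum of $m$ brackets of elements of $L$. *)

From HB Require Import structures.
From mathcomp Require Import all_boot all_order all_algebra.
From mathcomp Require Import fraction.
From Stdlib Require List.
Set Implicit Arguments. Unset Strict Implicit. Unset Printing Implicit Defensive.
Import Order.TTheory GRing.Theory Num.Theory.
Local Open Scope ring_scope.

(* The function field k(x) of the affine line, as the fraction field of k[x]. *)
Notation Kx k := {fraction {poly k}}.

Definition tof (k : idomainType) (q : {poly k}) : Kx k := FracField.tofrac q.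

Definition pC (k : idomainType) (s : seq k) : {poly k} :=
  \prod_(a <- s) ('X - a%:P).

(* Coordinate ring O(C) of C = A^1 \ s, i.e. k[x][1/p_s], as a subring of k(x):
   the elements f / p_s^m with f in k[x]. *)
Definition inOC (k : idomainType) (s : seq k) (u : Kx k) : Prop :=
  exists (f : {poly k}) (m : nat), u = tof f / (tof (pC s)) ^+ m.

(* A k-derivation of O(C), represented by a function on k(x) that maps O(C)
   into O(C); only its values on O(C) matter (see eqV below). *)
Definition is_derivation (k : idomainType) (s : seq k) (D : Kx k -> Kx k) : Prop :=
  [/\ forall u, inOC s u -> inOC s (D u),
      forall u v, inOC s u -> inOC s v -> D (u + v) = D u + D v,
      forall (c : k) u, inOC s u -> D (tof c%:P * u) = tof c%:P * D u
    & forall u v, inOC s u -> inOC s v -> D (u * v) = u * D v + D u * v].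

Definition eqV (k : idomainType) (s : seq k) (D E : Kx k -> Kx k) : Prop :=
  forall u, inOC s u -> D u = E u.

Definition lie (k : idomainType) (D E : Kx k -> Kx k) : Kx k -> Kx k :=
  fun u => D (E u) - E (D u).

Definition sum_brackets (k : idomainType) (l : seq ((Kx k -> Kx k) * (Kx k -> Kx k)))
  : Kx k -> Kx k :=
  fun u => \sum_(de <- l) lie de.1 de.2 u.

Definition in_derived (k : idomainType) (s : seq k) (D : Kx k -> Kx k) : Prop :=
  exists l : seq ((Kx k -> Kx k) * (Kx k -> Kx k)),
    (forall de, List.In de l -> is_derivation s de.1 /\ is_derivation s de.2) /\
    eqV s D (sum_brackets l).

Definition sum_of_brackets_le (k : idomainType) (s : seq k) (m : nat)
  (D : Kx k -> Kx k) : Prop :=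
  exists l : seq ((Kx k -> Kx k) * (Kx k -> Kx k)),
    (size l <= m)%N /\
    (forall de, List.In de l -> is_derivation s de.1 /\ is_derivation s de.2) /\
    eqV s D (sum_brackets l).

Definition bracket_width_le (k : idomainType) (s : seq k) (m : nat) : Prop :=
  forall D, is_derivation s D -> in_derived s D -> sum_of_brackets_le s m D.

From HB Require Import structures.
From mathcomp Require Import all_boot all_order all_algebra.
From mathcomp Require Import fraction generic_quotient ring.
Set Implicit Arguments. Unset Strict Implicit. Unset Printing Implicit Defensive.
Import Order.TTheory GRing.Theory Num.Theory.
Local Open Scope ring_scope.

(** A derivation [D] of [O(C) = k[x, 1/p]] is [a d/dx] with [a = D x] in
    [O(C)], and [[g d/dx, h d/dx] = (g h' - h g') d/dx].  Write [a = F / W]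
    with [W = p^m]; in characteristic zero pick a polynomial [U] with
    [U' = F W].  Then [g = 1 / W] and [h = U / W] lie in [O(C)] and
    [g h' - h g' = U' / W^2 = a], so every vector field on [C] is a single
    bracket, which bounds the bracket width by one. *)

Local Notation "x %:F" := (FracField.tofrac x).

Lemma frac_reprE (R : idomainType) (u : {fraction R}) :
  u = (\n_(repr u))%:F / (\d_(repr u))%:F.
Proof.
rewrite -[u in LHS]reprK; set x := repr u.
have dx : (\d_x)%:F != 0 by rewrite tofrac_eq0 denom_ratioP.
apply/(mulIf dx); rewrite divfK //; unlock FracField.tofrac.
rewrite -[_ * _]/(FracField.mul _ _) piE; apply/eqmodP.
by rewrite /= FracField.equivfE /FracField.mulf
  !numden_Ratio ?(oner_neq0, mulf_neq0, denom_ratioP) // !mulr1 mulrC.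
Qed.

Lemma frac_ind (R : idomainType) (P : {fraction R} -> Prop) :
  (forall n d : R, d != 0 -> P (n%:F / d%:F)) -> forall u, P u.
Proof. by move=> HP u; rewrite [u]frac_reprE; apply/HP/denom_ratioP. Qed.

Section FracDeriv.
Variable R : idomainType.
Local Notation F := {fraction {poly R}}.

Definition fderiv (u : F) : F :=
  let r := repr u in ((\n_r)^`() * \d_r - \n_r * (\d_r)^`())%:F / (\d_r ^+ 2)%:F.

Lemma deriv_quotient_compat (n1 d1 n2 d2 : {poly R}) : n1 * d2 = n2 * d1 ->
  (n1^`() * d1 - n1 * d1^`()) * d2 ^+ 2 = (n2^`() * d2 - n2 * d2^`()) * d1 ^+ 2.
Proof.
move=> E; have E' := congr1 (@deriv _) E; rewrite !derivM in E'.
apply/eqP; rewrite -subr_eq0; apply/eqP.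
(* both sides of [E] and of its derivative [E'] appear in this expansion *)
have -> : (n1^`() * d1 - n1 * d1^`()) * d2 ^+ 2 - (n2^`() * d2 - n2 * d2^`()) * d1 ^+ 2
  = d1 * d2 * ((n1^`() * d2 + n1 * d2^`()) - (n2^`() * d1 + n2 * d1^`()))
    - (d1^`() * d2 + d1 * d2^`()) * (n1 * d2 - n2 * d1) by ring.
by rewrite E' E !subrr !mulr0 subrr.
Qed.

Lemma eq_tofrac_div (a b c d : {poly R}) : b != 0 -> d != 0 ->
  (a%:F / b%:F == c%:F / d%:F) = (a * d == c * b).
Proof. by move=> b_neq0 d_neq0; rewrite eqr_div ?tofrac_eq0 // -!tofracM tofrac_eq. Qed.

Lemma fderiv_frac (n d : {poly R}) : d != 0 ->
  fderiv (n%:F / d%:F) = (n^`() * d - n * d^`())%:F / (d ^+ 2)%:F.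
Proof.
move=> d_neq0; rewrite /fderiv; set r := repr _.
have dr_neq0 := denom_ratioP r.
have /eqP cross : n * \d_r == \n_r * d by rewrite -eq_tofrac_div // -frac_reprE.
apply/eqP; rewrite eq_tofrac_div ?expf_neq0 //.
by rewrite (deriv_quotient_compat cross).
Qed.

Lemma fderiv_poly (p : {poly R}) : fderiv p%:F = (p^`())%:F.
Proof.
rewrite -[p%:F]divr1 -tofrac1 fderiv_frac ?oner_neq0 //.
by rewrite -polyC1 derivC !mulr0 !mulr1 subr0 expr1n tofrac1 divr1.
Qed.

Lemma fderivD (u v : F) : fderiv (u + v) = fderiv u + fderiv v.
Proof.
elim/frac_ind: u => a b b_neq0; elim/frac_ind: v => c d d_neq0.
have [bF dF] : b%:F != 0 /\ d%:F != 0 by rewrite !tofrac_eq0.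
have [b2F d2F] : (b ^+ 2)%:F != 0 /\ (d ^+ 2)%:F != 0 by rewrite !tofrac_eq0 !expf_neq0.
rewrite (addf_div _ _ bF dF) -!tofracM -tofracD !fderiv_frac ?mulf_neq0 //.
rewrite (addf_div _ _ b2F d2F) -!tofracM -tofracD.
apply/eqP; rewrite eq_tofrac_div ?mulf_neq0 ?expf_neq0 //; apply/eqP.
by rewrite !(derivD, derivM); ring.
Qed.

Lemma fderivM (u v : F) : fderiv (u * v) = u * fderiv v + fderiv u * v.
Proof.
elim/frac_ind: u => a b b_neq0; elim/frac_ind: v => c d d_neq0.
have [bF dF] : b%:F != 0 /\ d%:F != 0 by rewrite !tofrac_eq0.
have [b2F d2F] : (b ^+ 2)%:F != 0 /\ (d ^+ 2)%:F != 0 by rewrite !tofrac_eq0 !expf_neq0.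
rewrite (mulf_div a%:F) -!tofracM !fderiv_frac ?mulf_neq0 //.
rewrite (mulf_div a%:F) (mulf_div _ (b ^+ 2)%:F).
rewrite (addf_div _ _ (mulf_neq0 bF d2F) (mulf_neq0 b2F dF)) -!tofracM -tofracD.
apply/eqP; rewrite eq_tofrac_div ?mulf_neq0 ?expf_neq0 //; apply/eqP.
by rewrite !(derivD, derivM); ring.
Qed.

Definition vf (a : F) : F -> F := fun u => a * fderiv u.

Definition wronskian (g h : F) : F := g * fderiv h - h * fderiv g.

Lemma lie_vf (a b u : F) : lie (vf a) (vf b) u = vf (wronskian a b) u.
Proof. by rewrite /lie /vf /wronskian !fderivM; ring. Qed.

Lemma wronskianE (g h : F) : g != 0 -> wronskian g h = g ^+ 2 * fderiv (h / g).
Proof.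
move=> g_neq0; rewrite /wronskian; set q := h / g.
have -> : h = q * g by rewrite divfK.
by rewrite fderivM; ring.
Qed.

End FracDeriv.

Lemma exists_antideriv (k : fieldType) (hk : [pchar k] =i pred0) (q : {poly k}) :
  exists U : {poly k}, U^`() = q.
Proof.
exists (\poly_(i < (size q).+1) (q`_i.-1 / i%:R)).
apply/polyP => i; rewrite coef_deriv coef_poly.
case: ltnP => [_ | size_le]; last by rewrite mul0rn nth_default.
by rewrite -(mulr_natr (q`_i / _)) divfK //; move/pcharf0P: hk => ->.
Qed.

Section CoordinateRing.
Variables (k : idomainType) (s : seq k).
Local Notation P := (pC s).

Lemma pC_neq0 : P != 0.
Proof. exact/monic_neq0/monic_prod_XsubC. Qed.

Lemma pCX_neq0 m : (P ^+ m)%:F != 0.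
Proof. by rewrite tofrac_eq0 expf_neq0 // pC_neq0. Qed.

Lemma inOC_tofrac f : inOC s f%:F.
Proof. by exists f, 0%N; rewrite expr0 divr1. Qed.

Lemma inOC_M u v : inOC s u -> inOC s v -> inOC s (u * v).
Proof.
case=> f1 [m1 ->]; case=> f2 [m2 ->]; exists (f1 * f2), (m1 + m2)%N.
by rewrite /tof mulf_div tofracM exprD.
Qed.

Lemma inOC_fderiv u : inOC s u -> inOC s (fderiv u).
Proof.
case=> f [m ->]; rewrite /tof -tofracXn fderiv_frac ?expf_neq0 ?pC_neq0 //.
by exists (f^`() * P ^+ m - f * (P ^+ m)^`()), (m * 2)%N; rewrite /tof -!tofracXn exprM.
Qed.

Lemma is_derivation_vf a : inOC s a -> is_derivation s (vf a).
Proof.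
move=> a_in; split=> [u u_in | u v _ _ | c u _ | u v _ _]; rewrite /vf.
- exact/inOC_M/inOC_fderiv.
- by rewrite fderivD mulrDr.
- by rewrite /tof fderivM fderiv_poly derivC tofrac0 mul0r addr0 mulrCA.
- by rewrite fderivM mulrDr mulrCA !mulrA.
Qed.

Section Derivation.
Variable D : Kx k -> Kx k.
Hypothesis D_der : is_derivation s D.

Let derivationD u v : inOC s u -> inOC s v -> D (u + v) = D u + D v.
Proof. by case: D_der => _ H _ _; apply: H. Qed.
Let derivationM u v : inOC s u -> inOC s v -> D (u * v) = u * D v + D u * v.
Proof. by case: D_der => _ _ _ H; apply: H. Qed.
Let derivationZ (c : k) u : inOC s u -> D (c%:P%:F * u) = c%:P%:F * D u.
Proof. by case: D_der => _ _ H _; apply: H. Qed.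

Lemma derivation0 : D 0 = 0.
Proof.
have := derivationD (inOC_tofrac 0) (inOC_tofrac 0).
by rewrite tofrac0 addr0 => /eqP; rewrite -subr_eq subrr eq_sym => /eqP.
Qed.

Lemma derivation1 : D 1 = 0.
Proof.
have := derivationM (inOC_tofrac 1) (inOC_tofrac 1).
by rewrite tofrac1 !mulr1 !mul1r => /eqP; rewrite -subr_eq subrr eq_sym => /eqP.
Qed.

Lemma derivation_poly q : D q%:F = (q^`())%:F * D 'X%:F.
Proof.
elim/poly_ind: q => [|q c IHq]; first by rewrite tofrac0 derivation0 deriv0 tofrac0 mul0r.
have DC : D c%:P%:F = 0.
  by have := derivationZ c (inOC_tofrac 1); rewrite tofrac1 mulr1 derivation1 mulr0.
have qX_in := inOC_M (inOC_tofrac q) (inOC_tofrac 'X).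
rewrite tofracD tofracM (derivationD qX_in (inOC_tofrac _)).
rewrite (derivationM (inOC_tofrac q) (inOC_tofrac 'X)) DC addr0 IHq.
by rewrite derivMXaddC tofracD tofracM mulrDl mulrAC.
Qed.

Lemma derivationE u : inOC s u -> D u = fderiv u * D 'X%:F.
Proof.
move=> u_in; case: (u_in) => f [m u_eq]; rewrite /tof -tofracXn in u_eq.
have W_neq0 := pCX_neq0 m; move: (P ^+ m) W_neq0 u_eq => W W_neq0 u_eq.
have f_eq : f%:F = u * W%:F by rewrite u_eq divfK.
(* [D] and [fderiv u * D x] satisfy the same Leibniz rule on [f = u W] *)
have DuW : D u * W%:F = D f%:F - u * D W%:F.
  by rewrite f_eq (derivationM u_in (inOC_tofrac W)) addrAC subrr add0r.
have FuW : fderiv u * W%:F = (f^`())%:F - u * (W^`())%:F.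
  by rewrite -!fderiv_poly f_eq fderivM addrAC subrr add0r.
apply: (mulIf W_neq0).
by rewrite DuW (derivation_poly f) (derivation_poly W) mulrAC FuW; ring.
Qed.

End Derivation.

End CoordinateRing.

Lemma wronskian_onto (k : fieldType) (hk : [pchar k] =i pred0) (s : seq k) a :
  inOC s a -> exists g h, [/\ inOC s g, inOC s h & a = wronskian g h].
Proof.
case=> F [m ->]; rewrite /tof -tofracXn; set W := pC s ^+ m.
have [U U_deriv] := exists_antideriv hk (F * W).
have W_neq0 : W%:F != 0 := pCX_neq0 s m.
exists W%:F^-1, (U%:F / W%:F); split.
- by exists 1, m; rewrite /tof tofrac1 div1r tofracXn.
- by exists U, m; rewrite /tof tofracXn.
rewrite (wronskianE _ (invr_neq0 W_neq0)) invrK (divfK W_neq0) fderiv_poly U_deriv.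
by rewrite tofracM expr2 [RHS]mulrC mulrA (mulfK W_neq0).
Qed.

Theorem proposition3p1 (k : closedFieldType) (hk : [pchar k] =i pred0)
  (s : seq k) : bracket_width_le s 2.
Proof.
move=> D D_der _.
have DX_in : inOC s (D 'X%:F) by case: D_der => H _ _ _; apply/H/inOC_tofrac.
have [g [h [g_in h_in DX_eq]]] := wronskian_onto hk DX_in.
exists [:: (vf g, vf h)]; split=> //; split.
  by move=> _ [<- | []]; split; apply: is_derivation_vf.
move=> u u_in; rewrite /sum_brackets big_seq1 lie_vf /=.
by rewrite (derivationE D_der u_in) DX_eq /vf mulrC.
Qed.
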